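(* Let $\alpha:M_s\to M_s$ be completely positive with $\alpha(I)\le I$. Suppose: (i) there is no projection $p$ with $0<p<I$ and $\alpha(p)\ge p$; (ii) there exists $n\ge0$ with $\alpha^{n+1}(I)=\alpha^n(I)=:v$; (iii) $v$ is positive definite (has full support). Then $\alpha(I)=I$.
   Context: $M_s$ is the algebra of complex $s\times s$ matrices with the positive semidefinite order; $\alpha^0=\mathrm{id}$. *)

(* Complex numbers are R[i] = complex R for a real closed
   field R (this includes the classical complex numbers, R = reals). *)
From HB Require Import structures.
From mathcomp Require Import all_boot all_order all_algebra.
From mathcomp Require Export complex.
Set Implicit Arguments. Unset Strict Implicit. Unset Printing Implicit Defensive.
Import Order.TTheory GRing.Theory Num.Theory.
Local Open Scope ring_scope.

Definition adjmx (C : numClosedFieldType) (m n : nat) (A : 'M[C]_(m, n)) : 'M[C]_(n, m) :=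
  (map_mx Num.conj A)^T.

Definition psdmx (C : numClosedFieldType) (n : nat) (A : 'M[C]_n) : Prop :=
  adjmx A = A /\ forall x : 'cV[C]_n, 0 <= (adjmx x *m A *m x) 0 0.

Definition mxle (C : numClosedFieldType) (n : nat) (A B : 'M[C]_n) : Prop :=
  psdmx (B - A).

Definition is_projection (C : numClosedFieldType) (n : nat) (p : 'M[C]_n) : Prop :=
  adjmx p = p /\ p *m p = p.

Definition posdefmx (C : numClosedFieldType) (n : nat) (A : 'M[C]_n) : Prop :=
  psdmx A /\ A \in unitmx.

(* completely positive: for every k, id_{M_k} (x) alpha maps positive
   elements of M_k(M_s) (k x k block matrices with s x s blocks) to
   positive elements *)
Definition completely_positive (C : numClosedFieldType) (s : nat)
    (alpha : 'M[C]_s -> 'M[C]_s) : Prop :=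
  forall (k : nat) (B : 'I_k -> 'I_k -> 'M[C]_s),
    psdmx (\mxblock_(i < k, j < k) B i j) ->
    psdmx (\mxblock_(i < k, j < k) alpha (B i j)).

From HB Require Import structures.
From mathcomp Require Import all_boot all_order all_algebra.
From mathcomp Require Import complex.
From mathcomp Require Import ring.
Import Order.TTheory GRing.Theory Num.Theory.
Local Open Scope ring_scope.

Set Implicit Arguments. Unset Strict Implicit. Unset Printing Implicit Defensive.

(* Since [0 <= v <= 1] and [alpha v = v], split [v] spectrally at the eigenvalue
   [1]: with [p] the eigenprojection for [1] and [c < 1] bounding the other
   eigenvalues, [v <= p + c (1 - p)].  Applying [alpha] and using [alpha 1 <= 1]
   forces [(1 - alpha p) p = 0], hence [alpha p >= p], so [p] is [0] or [1] by
   (i).  If [p = 1] then [v = 1] and [alpha 1 = alpha v = v = 1].  If [p = 0]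
   then [v <= c 1], and iterating [alpha] gives [v <= c alpha^n(1) = c v], which
   is impossible for a positive definite [v]. *)

Section Adjoint.
Variable C : numClosedFieldType.

Lemma adjmxM m n p (A : 'M[C]_(m, n)) (B : 'M[C]_(n, p)) :
  adjmx (A *m B) = adjmx B *m adjmx A.
Proof. by rewrite /adjmx map_mxM trmx_mul. Qed.

Lemma adjmxB m n (A B : 'M[C]_(m, n)) : adjmx (A - B) = adjmx A - adjmx B.
Proof. by rewrite /adjmx map_mxB linearB. Qed.

Lemma adjmxZ m n a (A : 'M[C]_(m, n)) : adjmx (a *: A) = a^* *: adjmx A.
Proof. by rewrite /adjmx map_mxZ linearZ. Qed.

Lemma adjmxK m n (A : 'M[C]_(m, n)) : adjmx (adjmx A) = A.
Proof. by apply/matrixP => i j; rewrite !mxE conjCK. Qed.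

Lemma adjmx1 n : adjmx (1%:M : 'M[C]_n) = 1%:M.
Proof. by rewrite /adjmx map_mx1 trmx1. Qed.

Lemma adjmx_diag n (d : 'rV[C]_n) : adjmx (diag_mx d) = diag_mx (map_mx Num.conj d).
Proof. by rewrite /adjmx map_diag_mx tr_diag_mx. Qed.

Lemma adjmx_delta n (i : 'I_n) : adjmx (delta_mx i 0 : 'cV[C]_n) = delta_mx 0 i.
Proof. by apply/matrixP => a b; rewrite !mxE conjC_nat andbC. Qed.

Lemma adjmxE n (A : 'M[C]_n) : adjmx A = map_mx Num.conj A^T.
Proof. by rewrite /adjmx map_trmx. Qed.

End Adjoint.

Section PositiveSemidefinite.
Variable C : numClosedFieldType.

Definition qform n (A : 'M[C]_n) (x : 'cV[C]_n) : C := (adjmx x *m A *m x) 0 0.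

Lemma qformD n (A B : 'M[C]_n) x : qform (A + B) x = qform A x + qform B x.
Proof. by rewrite /qform mulmxDr mulmxDl mxE. Qed.

Lemma qformN n (A : 'M[C]_n) x : qform (- A) x = - qform A x.
Proof. by rewrite /qform mulmxN mulNmx mxE. Qed.

Lemma qformB n (A B : 'M[C]_n) x : qform (A - B) x = qform A x - qform B x.
Proof. by rewrite qformD qformN. Qed.

Lemma qformZ n a (A : 'M[C]_n) x : qform (a *: A) x = a * qform A x.
Proof. by rewrite /qform -scalemxAr -scalemxAl mxE. Qed.

Lemma psdmx_qform n (A : 'M[C]_n) x : psdmx A -> 0 <= qform A x.
Proof. by case=> _; apply. Qed.

Lemma psdmxD n (A B : 'M[C]_n) : psdmx A -> psdmx B -> psdmx (A + B).
Proof.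
move=> [adjA qA] [adjB qB]; split.
  by rewrite /adjmx map_mxD linearD /= -!/(adjmx _) adjA adjB.
by move=> x; rewrite -/(qform _ x) qformD addr_ge0 ?qA ?qB.
Qed.

Lemma psdmxZ n a (A : 'M[C]_n) : 0 <= a -> psdmx A -> psdmx (a *: A).
Proof.
move=> a_ge0 [adjA qA]; split; first by rewrite adjmxZ geC0_conj // adjA.
by move=> x; rewrite -/(qform _ x) qformZ mulr_ge0 ?qA.
Qed.

Lemma psdmx_conj n m (M : 'M[C]_(n, m)) (A : 'M[C]_n) :
  psdmx A -> psdmx (adjmx M *m A *m M).
Proof.
move=> [adjA qA]; split; first by rewrite !adjmxM adjmxK adjA mulmxA.
by move=> x; have := qA (M *m x); rewrite adjmxM !mulmxA.
Qed.

Lemma psdmx_diag n (d : 'rV[C]_n) : (forall i, 0 <= d 0 i) -> psdmx (diag_mx d).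
Proof.
move=> d_ge0; split.
  by rewrite adjmx_diag; congr diag_mx; apply/rowP => i; rewrite mxE geC0_conj.
move=> x; rewrite mul_mx_diag mxE; apply: sumr_ge0 => i _.
by rewrite !mxE mulrC mulrA mulr_ge0 ?mul_conjC_ge0.
Qed.

Lemma psdmx1 n : psdmx (1%:M : 'M[C]_n).
Proof. by rewrite -diag_const_mx; apply: psdmx_diag => i; rewrite mxE ler01. Qed.

Lemma psdmx0 n : psdmx (0 : 'M[C]_n).
Proof. by rewrite -(scale0r 1%:M); apply: psdmxZ (lexx 0) (psdmx1 n). Qed.

Lemma qform1_eq0 n (x : 'cV[C]_n) : qform 1%:M x = 0 -> x = 0.
Proof.
rewrite /qform mulmx1 mxE => /psumr_eq0P x0; apply/matrixP => i j.
have /x0 : forall k, true -> 0 <= adjmx x 0 k * x k 0.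
  by move=> k _; rewrite !mxE mulrC mul_conjC_ge0.
move=> /(_ i isT); rewrite !mxE ord1 mulrC => /eqP.
by rewrite mul_conjC_eq0 => /eqP.
Qed.

(* Testing [A] against [(a + 1) x - k y] with [y = A x], [k = |y|^2] and
   [a = y^* A y] gives [0 <= - k^2 (a + 2)]. *)
Lemma psdmx_qform_eq0 n (A : 'M[C]_n) x : psdmx A -> qform A x = 0 -> A *m x = 0.
Proof.
move=> psdA qAx0; have [adjA qA] := psdA; set y := A *m x.
set k := qform 1%:M y; set a := qform A y.
have k_ge0 : 0 <= k := psdmx_qform y (psdmx1 n).
have a_ge0 : 0 <= a := qA y.
have xAy : (adjmx x *m A *m y) 0 0 = k by rewrite /k /qform mulmx1 /y adjmxM adjA.
have yAx : (adjmx y *m A *m x) 0 0 = k by rewrite -mulmxA -/y /k /qform mulmx1.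
have := qA ((a + 1) *: x - k *: y).
rewrite adjmxB !adjmxZ !geC0_conj ?addr_ge0 ?ler01 //.
rewrite -trace_mx11 !(mulmxBl, mulmxBr) -!scalemxAl -!scalemxAr.
rewrite !raddfB /= !mxtraceZ !trace_mx11 -/(qform A x) qAx0 xAy yAx -/(qform A y) -/a.
rewrite [X in 0 <= X](_ : _ = - (k * k * (a + 2))); last by ring.
rewrite oppr_ge0 pmulr_lle0 ?(ltr_wpDl a_ge0) ?ltr0n // => kk_le0.
have : k * k == 0 by rewrite eq_le kk_le0 mulr_ge0.
by rewrite mulf_eq0 orbb => /eqP/qform1_eq0.
Qed.

Lemma mulmx_cV_eq0 m n (M : 'M[C]_(m, n)) : (forall x : 'cV_n, M *m x = 0) -> M = 0.
Proof.
move=> Mx0; apply/matrixP => i j; have /matrixP/(_ i 0) := Mx0 (delta_mx j 0).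
by rewrite -colE !mxE.
Qed.

Lemma psdmx_le_scale_eq0 n (A : 'M[C]_n) c :
  psdmx A -> c < 1 -> mxle A (c *: A) -> A = 0.
Proof.
move=> psdA c_lt1 A_le; apply: mulmx_cV_eq0 => x; apply: psdmx_qform_eq0 => //.
have := psdmx_qform x A_le; rewrite qformB qformZ -{2}[qform A x]mul1r -mulrBl.
rewrite nmulr_rge0 ?subr_lt0 // => q_le0.
by apply/eqP; rewrite eq_le q_le0 psdmx_qform.
Qed.

Lemma mxle1_adjmx n (A : 'M[C]_n) : mxle A 1%:M -> adjmx A = A.
Proof.
by case=> /eqP; rewrite adjmxB adjmx1 (inj_eq (addrI _)) (inj_eq oppr_inj) => /eqP.
Qed.

Lemma projection_psdmx n (p : 'M[C]_n) : is_projection p -> psdmx p.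
Proof.
by move=> [adjp pp]; rewrite -{1}pp -{1}adjp -[p in _ *m p]mul1mx mulmxA;
  apply: psdmx_conj; apply: psdmx1.
Qed.

Lemma projection_compl n (p : 'M[C]_n) : is_projection p -> is_projection (1%:M - p).
Proof.
move=> [adjp pp]; split; first by rewrite adjmxB adjmx1 adjp.
by rewrite mulmxBl mul1mx mulmxBr mulmx1 pp subrr subr0.
Qed.

End PositiveSemidefinite.

Section Spectral.
Variable C : numClosedFieldType.

Lemma ltr1_uniform_bound (I : finType) (f : I -> C) :
  (forall i, f i < 1) -> exists c, [/\ 0 <= c, c < 1 & forall i, f i <= c].
Proof.
move=> f_lt1; suff [c [c_ge0 c_lt1 c_ub]] :
    exists c, [/\ 0 <= c, c < 1 & {in enum I, forall i, f i <= c}].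
  by exists c; split=> // i; apply: c_ub; rewrite mem_enum.
elim: (enum I) => [|i r [c [c_ge0 c_lt1 c_ub]]]; first by exists 0; rewrite lexx ltr01.
have [fi_le|c_lt_fi] := real_leP (ler1_real (ltW (f_lt1 i))) (ger0_real c_ge0).
  by exists c; split=> // j; rewrite inE => /predU1P [->|/c_ub].
exists (f i); split; [exact: le_trans c_ge0 (ltW c_lt_fi) | exact: f_lt1 |].
by move=> j; rewrite inE => /predU1P [->|/c_ub/le_trans] //; apply; apply: ltW.
Qed.

Lemma hermitian_unitary_diag n (v : 'M[C]_n) : adjmx v = v ->
  exists (W : 'M[C]_n) (d : 'rV[C]_n),
    [/\ W *m adjmx W = 1%:M, adjmx W *m W = 1%:M & v = adjmx W *m diag_mx d *m W].
Proof.
move=> adj_v; have W_unitary := spectral_unitarymx v.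
have WW' : spectralmx v *m adjmx (spectralmx v) = 1%:M.
  by rewrite adjmxE; apply/unitarymxP.
exists (spectralmx v), (spectral_diag v); split=> //; first exact: mulmx1C.
have /orthomx_spectralP : v \is normalmx by apply/normalmxP; rewrite -adjmxE adj_v.
by rewrite invmx_unitary // -adjmxE.
Qed.

Lemma qform_unitary_conj n (W X : 'M[C]_n) i : W *m adjmx W = 1%:M ->
  qform (adjmx W *m X *m W) (adjmx W *m delta_mx i 0) = X i i.
Proof.
move=> WW'; rewrite /qform adjmxM adjmxK adjmx_delta !mulmxA -(mulmxA _ W) WW' mulmx1.
by rewrite -!mulmxA (mulmxA W) WW' mul1mx -rowE -colE !mxE.
Qed.

Lemma mxle1_eigenprojection n (v : 'M[C]_n) : mxle v 1%:M ->
  exists p c, [/\ is_projection p, v *m p = p, 0 <= c, c < 1 &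
                  mxle v (p + c *: (1%:M - p))].
Proof.
move=> v_le1; have [W [d [WW' W'W vE]]] := hermitian_unitary_diag (mxle1_adjmx v_le1).
pose cW X := adjmx W *m X *m W.
have cW1 : cW 1%:M = 1%:M by rewrite /cW mulmx1 W'W.
have cWM X Y : cW X *m cW Y = cW (X *m Y).
  by rewrite /cW !mulmxA -(mulmxA _ W) WW' mulmx1.
have d_le1 i : d 0 i <= 1.
  have := psdmx_qform (adjmx W *m delta_mx i 0) v_le1.
  by rewrite qformB -{1}cW1 vE !qform_unitary_conj // !mxE eqxx subr_ge0.
pose b := \row_i ((d 0 i == 1)%:R : C).
have gap i : (if d 0 i == 1 then 0 else d 0 i) < 1.
  by case: eqP => [_|/eqP d_neq1]; rewrite ?ltr01 // lt_neqAle d_neq1 d_le1.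
have [c [c_ge0 c_lt1 c_ub]] := ltr1_uniform_bound gap.
exists (cW (diag_mx b)), c; split=> //.
- split; last by rewrite cWM mulmx_diag; congr (cW (diag_mx _)); apply/rowP => i;
    rewrite !mxE; case: (_ == 1); rewrite ?mulr1 ?mulr0.
  rewrite /cW !adjmxM adjmxK adjmx_diag mulmxA; congr (_ *m diag_mx _ *m _).
  by apply/rowP => i; rewrite !mxE conjC_nat.
- rewrite vE cWM mulmx_diag; congr (cW (diag_mx _)); apply/rowP => i.
  by rewrite !mxE; case: eqP => [->|_]; rewrite ?mulr1 ?mulr0.
rewrite /mxle [X in psdmx X](_ : _ =
    cW (diag_mx (\row_i (b 0 i + c * (1 - b 0 i) - d 0 i)))).
  apply: psdmx_conj; apply: psdmx_diag => i; have := c_ub i; rewrite !mxE.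
  case: eqP => [-> _|_ d_le]; first by rewrite subrr mulr0 addr0 subrr.
  by rewrite subr0 mulr1 add0r subr_ge0.
have -> : diag_mx (\row_i (b 0 i + c * (1 - b 0 i) - d 0 i)) =
    diag_mx b + c *: (1%:M - diag_mx b) - diag_mx d.
  by apply/matrixP => k l; rewrite !mxE; case: (k == l) => /=; ring.
by rewrite vE /cW !(mulmxBr, mulmxDr, mulmxBl, mulmxDl) -scalemxAr -scalemxAl
  mulmxBr mulmxBl mulmx1 W'W.
Qed.

End Spectral.

Lemma psdmx_castmx (C : numClosedFieldType) m n (e : m = n) (A : 'M[C]_m) :
  psdmx A -> psdmx (castmx (e, e) A).
Proof. by case: n / e; rewrite castmx_id. Qed.

Lemma completely_positive_psdmx (C : numClosedFieldType) s (alpha : 'M[C]_s -> 'M[C]_s) :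
  completely_positive alpha -> forall A, psdmx A -> psdmx (alpha A).
Proof.
move=> cp A psdA; have e : (\sum_(i < 1) s)%N = s := big_ord1 _ (fun=> s).
have block1 (B : 'M[C]_s) : \mxblock_(i < 1, j < 1) B = castmx (esym e, esym e) B.
  by rewrite {2}(mxEmxblock B) castmx_comp castmx_id.
have := cp 1%N (fun _ _ => A); rewrite !block1 => /(_ (psdmx_castmx _ psdA)).
by move/(psdmx_castmx e); rewrite castmx_comp castmx_id.
Qed.

Section PositiveMap.
Variables (C : numClosedFieldType) (s : nat) (alpha : {linear 'M[C]_s -> 'M[C]_s}).
Hypothesis alpha_psd : forall A, psdmx A -> psdmx (alpha A).
Hypothesis alpha1_le1 : mxle (alpha 1%:M) 1%:M.

Lemma mxle1_map A : mxle A 1%:M -> mxle (alpha A) 1%:M.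
Proof.
move=> A_le1; rewrite /mxle.
have -> : 1%:M - alpha A = (1%:M - alpha 1%:M) + alpha (1%:M - A).
  by rewrite linearB addrA subrK.
exact: psdmxD alpha1_le1 (alpha_psd A_le1).
Qed.

Lemma mxle1_iter k : mxle (iter k alpha 1%:M) 1%:M.
Proof.
elim: k => [|k IH]; last exact: mxle1_map.
by rewrite /mxle subrr; apply: psdmx0.
Qed.

Lemma mxle_scale_iter (v : 'M[C]_s) c :
  alpha v = v -> mxle v (c *: 1%:M) -> forall k, mxle v (c *: iter k alpha 1%:M).
Proof.
move=> fix_v v_le; elim=> [//|k IH].
by rewrite /mxle iterS -fix_v -linearZ -linearB; apply: alpha_psd.
Qed.

Lemma projection_le_map (v p : 'M[C]_s) c :
  alpha v = v -> is_projection p -> v *m p = p -> 0 <= c -> c < 1 ->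
  mxle v (p + c *: (1%:M - p)) -> mxle p (alpha p).
Proof.
move=> fix_v proj_p vp c_ge0 c_lt1 v_le.
have [adj_p pp] := proj_p; set a := alpha p.
have a_le1 : mxle a 1%:M := mxle1_map (projection_psdmx (projection_compl proj_p)).
have ker x : qform (1%:M - a) (p *m x) = 0.
  set u := p *m x.
  have vu : qform v u = qform 1%:M u by rewrite /qform mulmx1 -mulmxA [v *m _]mulmxA vp.
  have H1 := psdmx_qform u (alpha_psd v_le).
  rewrite linearB linearD linearZ linearB /= fix_v -/a in H1.
  have H2 := psdmx_qform u alpha1_le1.
  rewrite !(qformB, qformD, qformZ) vu in H1 H2 *.
  have : 0 <= (1 - c) * (qform a u - qform 1%:M u).
    rewrite [X in _ <= X](_ : _ = (qform a u + c * (qform (alpha 1%:M) u - qform a u)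
      - qform 1%:M u) + c * (qform 1%:M u - qform (alpha 1%:M) u)); last by ring.
    by rewrite addr_ge0 ?mulr_ge0.
  rewrite pmulr_rge0 ?subr_gt0 // subr_ge0 => le_qa.
  by apply/eqP; rewrite eq_le subr_le0 le_qa -qformB psdmx_qform.
have ap : a *m p = p.
  have : (1%:M - a) *m p = 0.
    by apply: mulmx_cV_eq0 => x; rewrite -mulmxA psdmx_qform_eq0.
  by move/eqP; rewrite mulmxBl mul1mx subr_eq0 => /eqP.
have pa : p *m a = p by have := congr1 (@adjmx _ s s) ap; rewrite adjmxM adj_p mxle1_adjmx.
rewrite /mxle; have -> : a - p = adjmx (1%:M - p) *m a *m (1%:M - p).
  by rewrite adjmxB adjmx1 adj_p mulmxBl mul1mx pa mulmxBr mulmx1 mulmxBl ap pp subrr subr0.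
exact: psdmx_conj (alpha_psd (projection_psdmx proj_p)).
Qed.

End PositiveMap.

Unset Implicit Arguments.

Theorem proposition9p12 (R : rcfType) (s : nat)
    (alpha : {linear 'M[R[i]]_s -> 'M[R[i]]_s}) :
  completely_positive alpha ->
  mxle (alpha 1%:M) 1%:M ->
  (* (i) no projection p with 0 < p < I and alpha(p) >= p *)
  (forall p : 'M[R[i]]_s, is_projection p -> p <> 0 -> p <> 1%:M ->
     ~ mxle p (alpha p)) ->
  (* (ii) alpha^(n+1)(I) = alpha^n(I) =: v for some n, and (iii) v is positive definite *)
  (exists n : nat, iter n.+1 alpha 1%:M = iter n alpha 1%:M /\
                   posdefmx (iter n alpha 1%:M)) ->
  alpha 1%:M = 1%:M.
Proof.
move=> cp alpha1_le1 no_projection [n [fix_v [psd_v unit_v]]].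
set v := iter n alpha 1%:M in fix_v psd_v unit_v.
have {}fix_v : alpha v = v := fix_v.
have alpha_psd := completely_positive_psdmx cp.
have [p [c [proj_p vp c_ge0 c_lt1 v_le]]] :=
  mxle1_eigenprojection (mxle1_iter alpha_psd alpha1_le1 n).
have p_le := projection_le_map alpha_psd alpha1_le1 fix_v proj_p vp c_ge0 c_lt1 v_le.
have [p1|/eqP p_neq1] := eqVneq p 1%:M.
  have v1 : v = 1%:M by rewrite -[v]mulmx1 -p1 vp.
  by move: fix_v; rewrite v1.
have [p0|/eqP p_neq0] := eqVneq p 0; last by case: (no_projection p proj_p p_neq0 p_neq1 p_le).
rewrite p0 subr0 add0r in v_le.
have v0 : v = 0 := psdmx_le_scale_eq0 psd_v c_lt1 (mxle_scale_iter alpha_psd fix_v v_le n).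
by case: p_neq1; rewrite p0 -(mulmxV unit_v) v0 mul0mx.
Qed.
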